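(* Assume the regularity conditions (C1) and (C2) below, let $\hat\Lambda$ be a given selection rule, and let $\hat{\boldsymbol\theta}$ be a coherent estimator of $\boldsymbol\theta$ (true support $\Lambda$) whose selective biases $\mathbf b_k(\boldsymbol\theta,\Lambda)$ are differentiable in $\boldsymbol\theta_\Lambda$. Then the MSSE satisfies $$\mathrm{E}_{\boldsymbol\theta_\Lambda}[\mathbf C(\hat{\boldsymbol\theta},\hat\Lambda,\boldsymbol\theta)]\succeq \mathbf B_{\mathrm{sCRB}}(\boldsymbol\theta_\Lambda):=\sum_{k=1}^K\pi_k(\boldsymbol\theta_\Lambda)\Big(\boldsymbol\Psi_k(\boldsymbol\theta,\Lambda)+\mathbf b_k(\boldsymbol\theta,\Lambda)\mathbf b_k^T(\boldsymbol\theta,\Lambda)\Big),$$ where $\boldsymbol\Psi_k(\boldsymbol\theta,\Lambda)=(\mathbf D_k(\Lambda)+\mathbf G_k(\boldsymbol\theta,\Lambda))\mathbf J_k^{-1}(\boldsymbol\theta_\Lambda)(\mathbf D_k(\Lambda)+\mathbf G_k(\boldsymbol\theta,\Lambda))^T$ (sum over $k$ with $\pi_k(\boldsymbol\theta_\Lambda)\neq0$). Furthermore, the MSE matrix satisfies $$\mathrm{MSE}(\hat{\boldsymbol\theta},\boldsymbol\theta,\Lambda)\succeq \mathbf B_{\mathrm{sCRB}}(\boldsymbol\theta_\Lambda)+\sum_{k=1}^K\pi_k(\boldsymbol\theta_\Lambda)\boldsymbol\theta^{\mathrm{ZP}}_{\Lambda_k^c}(\boldsymbol\theta^{\mathrm{ZP}}_{\Lambda_k^c})^T-\sum_{k=1}^K\pi_k(\boldsymbol\theta_\Lambda)\Big(\boldsymbol\theta^{\mathrm{ZP}}_{\Lambda_k^c}\mathbf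 b_k^T(\boldsymbol\theta,\Lambda)+\mathbf b_k(\boldsymbol\theta,\Lambda)(\boldsymbol\theta^{\mathrm{ZP}}_{\Lambda_k^c})^T\Big).$$ In particular, if $\mathbf b_k\equiv\mathbf 0$ for all $k$, then $\mathbf B_{\mathrm{sCRB}}(\boldsymbol\theta_\Lambda)=\sum_{k=1}^K\pi_k(\boldsymbol\theta_\Lambda)\mathbf D_k(\Lambda)\mathbf J_k^{-1}(\boldsymbol\theta_\Lambda)\mathbf D_k^T(\Lambda)$.
   Context: Setting (estimation after model selection). $\boldsymbol\theta\in\mathbb{R}^M$ is an unknown deterministic vector. A finite family of nonempty candidate support sets $\Lambda_1,\dots,\Lambda_K\subseteq\{1,\dots,M\}$ is known; the true support $\Lambda$ is one of them, $\boldsymbol\theta_{\Lambda^c}=\mathbf 0$. $\boldsymbol\theta_S$ is the subvector indexed by $S$; $[\Lambda]_l$ denotes the $l$-th element of $\Lambda$ (in increasing order). The observation $\mathbf x\in\Omega_{\mathbf x}$ has pdf $f(\mathbf x;\boldsymbol\theta_\Lambda)$; $\mathrm{E}_{\boldsymbol\theta_\Lambda}$ is expectation under it. A selection rule is a deterministic measurable $\hat\Lambda:\Omega_{\mathbf x}\to\{\Lambda_1,\dots,\Lambda_K\}$; $\mathcal A_k=\{\mathbf x:\hat\Lambda(\mathbf x)=\Lambda_k\}$, $\pi_k(\boldsymbol\theta_\Lambda)=\Pr(\hat\Lambda=\Lambda_k;\boldsymbol\theta_\Lambda)$, and for $\pi_k\ne0$, $f(\mathbf x\mid\hat\Lambda=\Lambda_k;\boldsymbol\theta_\Lambda)=f(\mathbf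 x;\boldsymbol\theta_\Lambda)/\pi_k(\boldsymbol\theta_\Lambda)$ for $\mathbf x\in\mathcal A_k$. Zero-padding: $\mathbf a^{\mathrm{ZP}}_S\in\mathbb{R}^M$ has entry $a_m$ if $m\in S$, else $0$. Estimators $\hat{\boldsymbol\theta}:\Omega_{\mathbf x}\to\mathbb{R}^M$ have finite second moments; coherent means $\hat\theta_m(\mathbf x)=0$ whenever $m\notin\hat\Lambda(\mathbf x)$. SSE cost $\mathbf C(\hat{\boldsymbol\theta},\hat\Lambda,\boldsymbol\theta)=(\hat{\boldsymbol\theta}^{\mathrm{ZP}}_{\hat\Lambda}-\boldsymbol\theta^{\mathrm{ZP}}_{\hat\Lambda})(\hat{\boldsymbol\theta}^{\mathrm{ZP}}_{\hat\Lambda}-\boldsymbol\theta^{\mathrm{ZP}}_{\hat\Lambda})^T$; MSSE is its expectation; $\mathrm{MSE}(\hat{\boldsymbol\theta},\boldsymbol\theta,\Lambda)=\mathrm{E}_{\boldsymbol\theta_\Lambda}[(\hat{\boldsymbol\theta}-\boldsymbol\theta)(\hat{\boldsymbol\theta}-\boldsymbol\theta)^T]$. Selective bias $\mathbf b_k(\boldsymbol\theta,\Lambda)=\mathrm{E}_{\boldsymbol\theta_\Lambda}[\hat{\boldsymbol\theta}^{\mathrm{ZP}}_{\Lambda_k}-\boldsymbol\theta^{\mathrm{ZP}}_{\Lambda_k}\mid\hat\Lambda=\Lambda_k]$; $\mathbf G_k(\boldsymbol\theta,\Lambda)=\nabla_{\boldsymbol\theta_\Lambda}\mathbf b_k(\boldsymbol\theta,\Lambda)\in\mathbb{R}^{M\times|\Lambda|}$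 (entry $(m,l)$ is $\partial[\mathbf b_k]_m/\partial[\boldsymbol\theta_\Lambda]_l$). Post-model-selection score: $\boldsymbol\upsilon_k(\mathbf x,\boldsymbol\theta_\Lambda)=\nabla^T_{\boldsymbol\theta_\Lambda}\log f(\mathbf x\mid\hat\Lambda=\Lambda_k;\boldsymbol\theta_\Lambda)$ for $\mathbf x\in\mathcal A_k$ (a $|\Lambda|$-dimensional column vector). Selective FIM: $\mathbf J_k(\boldsymbol\theta_\Lambda)=\mathrm{E}_{\boldsymbol\theta_\Lambda}[\boldsymbol\upsilon_k\boldsymbol\upsilon_k^T\mid\hat\Lambda=\Lambda_k]$. $\mathbf D_k(\Lambda)$ is the $M\times|\Lambda|$ 0-1 matrix with $[\mathbf D_k(\Lambda)]_{m,l}=1$ if $m\in\Lambda_k$ and $m=[\Lambda]_l$, and $0$ otherwise. Regularity: (C1) the vectors $\boldsymbol\upsilon_k$ exist and the matrices $\mathbf J_k(\boldsymbol\theta_\Lambda)$ are well defined and nonsingular for all $\boldsymbol\theta_\Lambda\in\mathbb{R}^{|\Lambda|}$, $k=1,\dots,K$; (C2) for all $k$, every measurable $g:\Omega_{\mathbf x}\to\mathbb{R}$ (for which the integrals exist) and all $\boldsymbol\theta_\Lambda$, $\nabla_{\boldsymbol\theta_\Lambda}\int_{\mathcal A_k}g(\mathbf x)f(\mathbf x\mid\hat\Lambda=\Lambda_k;\boldsymbol\theta_\Lambda)\,d\mathbf x=\int_{\mathcal A_k}g(\mathbf x)\nabla_{\boldsymbol\theta_\Lambda}f(\mathbf x\mid\hat\Lambda=\Lambda_k;\boldsymbol\theta_\Lambda)\,d\mathbf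 x$. $\succeq$ is the positive semidefinite order. *)

From HB Require Import structures.
From mathcomp Require Import all_boot all_order all_algebra.
From mathcomp Require Import all_classical all_reals all_analysis.
Set Implicit Arguments.
Unset Strict Implicit.
Unset Printing Implicit Defensive.
Import Order.TTheory GRing.Theory Num.Theory.
Import numFieldNormedType.Exports.
Local Open Scope classical_set_scope.
Local Open Scope ring_scope.

Definition psd (R : realType) (n : nat) (A : 'M[R]_n) : Prop :=
  forall v : 'cV[R]_n, 0 <= (v^T *m A *m v) 0 0.
Definition psd_ge (R : realType) (n : nat) (A B : 'M[R]_n) : Prop :=
  psd (A - B).

Definition ebasis {R : realType} {L : nat} (l : 'I_L) : 'cV[R]_L :=
  delta_mx l 0.

(* [Lam]_l = enum_val l : the l-th element of Lam in increasing order.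
   theta = embedding of theta_Lam into R^M (zero outside Lam). *)
Definition theta_of (R : realType) (M : nat) (Lam : {set 'I_M})
  (t : 'cV[R]_#|Lam|) : 'cV[R]_M :=
  \col_m \sum_(l < #|Lam|) (if m == enum_val l then t l 0 else 0).

Definition Dmat {R : realType} (M : nat) (Lk Lam : {set 'I_M})
  : 'M[R]_(M, #|Lam|) :=
  \matrix_(m, l) (((m \in Lk) && (m == enum_val l))%:R).

Definition zp (R : realType) (M : nat) (S : {set 'I_M}) (a : 'cV[R]_M)
  : 'cV[R]_M := \col_m (if m \in S then a m 0 else 0).

Section Model.
Variables (R : realType) (d : measure_display) (T : measurableType d).
Variable (mu : {measure set T -> \bar R}).
Variables (L K : nat).
Variable (f : 'cV[R]_L -> T -> R).   (* f (theta_Lam) x = f(x; theta_Lam) *)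
Variable (sel : T -> 'I_K).           (* selection rule, as an index *)

Definition selset (k : 'I_K) : set T := sel @^-1` [set k].
Definition prob (k : 'I_K) (t : 'cV[R]_L) : R := Rintegral mu (selset k) (f t).
Definition fcond (k : 'I_K) (x : T) (t : 'cV[R]_L) : R := f t x / prob k t.
Definition cexp (k : 'I_K) (t : 'cV[R]_L) (g : T -> R) : R :=
  Rintegral mu (selset k) (fun x => g x * fcond k x t).
Definition cexpmx (p q : nat) (k : 'I_K) (t : 'cV[R]_L) (G : T -> 'M[R]_(p, q))
  : 'M[R]_(p, q) := \matrix_(i, j) cexp k t (fun x => G x i j).
Definition expmx (p q : nat) (t : 'cV[R]_L) (G : T -> 'M[R]_(p, q))
  : 'M[R]_(p, q) := \matrix_(i, j) Rintegral mu setT (fun x => G x i j * f t x).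
(* post-model-selection score: grad of log f(x|sel=k;.) = grad fcond / fcond
   (set to 0 where fcond = 0, a null set for the conditional law) *)
Definition score (k : 'I_K) (x : T) (t : 'cV[R]_L) : 'cV[R]_L :=
  \col_l ('D_(ebasis l) (fcond k x) t / fcond k x t).
Definition sFIM (k : 'I_K) (t : 'cV[R]_L) : 'M[R]_L :=
  cexpmx k t (fun x => score k x t *m (score k x t)^T).
End Model.

Section Estimation.
Variables (R : realType) (d : measure_display) (T : measurableType d).
Variable (mu : {measure set T -> \bar R}).
Variables (M K : nat) (Lams : 'I_K -> {set 'I_M}) (Lam : {set 'I_M}).
Variable (f : 'cV[R]_#|Lam| -> T -> R).
Variable (sel : T -> 'I_K).
Variable (th : T -> 'cV[R]_M).

Definition sbias (k : 'I_K) (t : 'cV[R]_#|Lam|) : 'cV[R]_M :=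
  cexpmx mu f sel k t
    (fun x => zp (Lams k) (th x) - zp (Lams k) (theta_of t)).
Definition Gmat (k : 'I_K) (t : 'cV[R]_#|Lam|) : 'M[R]_(M, #|Lam|) :=
  \matrix_(m, l) ('D_(ebasis l) (sbias k) t) m 0.
Definition Psi (k : 'I_K) (t : 'cV[R]_#|Lam|) : 'M[R]_M :=
  (Dmat (Lams k) Lam + Gmat k t) *m invmx (sFIM mu f sel k t)
    *m (Dmat (Lams k) Lam + Gmat k t)^T.
Definition BsCRB (t : 'cV[R]_#|Lam|) : 'M[R]_M :=
  \sum_(k < K | prob mu f sel k t != 0)
     prob mu f sel k t *: (Psi k t + sbias k t *m (sbias k t)^T).
Definition SSE (t : 'cV[R]_#|Lam|) (x : T) : 'M[R]_M :=
  (zp (Lams (sel x)) (th x) - zp (Lams (sel x)) (theta_of t)) *m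
  (zp (Lams (sel x)) (th x) - zp (Lams (sel x)) (theta_of t))^T.
Definition MSSE (t : 'cV[R]_#|Lam|) : 'M[R]_M := expmx mu f t (SSE t).
Definition MSE (t : 'cV[R]_#|Lam|) : 'M[R]_M :=
  expmx mu f t (fun x => (th x - theta_of t) *m (th x - theta_of t)^T).
End Estimation.

From HB Require Import structures.
From mathcomp Require Import all_boot all_order all_algebra.
From mathcomp Require Import all_classical all_reals all_analysis.
From mathcomp Require Import measurable_realfun.
From mathcomp Require Import lra ring.
Set Implicit Arguments.
Unset Strict Implicit.
Unset Printing Implicit Defensive.
Import Order.TTheory GRing.Theory Num.Theory.
Import numFieldNormedType.Exports.
Local Open Scope classical_set_scope.
Local Open Scope ring_scope.

(* The selection events A_k partition the sample space, so the MSSE is the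
   pi_k-weighted sum of the conditional second moments of the error
   e_k = th^ZP_{Lambda_k} - theta^ZP_{Lambda_k} given A_k.  Under the
   conditional law on A_k the score v_k has mean zero (differentiate
   E[1 | A_k] = 1 under the integral sign, by (C2)), and differentiating the
   bias b_k = E[e_k | A_k] gives E[(e_k - b_k) v_k^T | A_k] = D_k + G_k.
   The covariance inequality E[u u^T] >= E[u v^T] E[v v^T]^-1 E[v u^T] for
   u = e_k - b_k, v = v_k then bounds each conditional second moment below
   by b_k b_k^T + Psi_k.  The MSE bound follows because on A_k, coherence
   gives th - theta = e_k - theta^ZP_{Lambda_k^c}. *)

Lemma entryD (R : nmodType) m n (A B : 'M[R]_(m, n)) i j : (A + B) i j = A i j + B i j.
Proof. by rewrite mxE. Qed.

Lemma entryB (R : zmodType) m n (A B : 'M[R]_(m, n)) i j : (A - B) i j = A i j - B i j.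
Proof. by rewrite !mxE. Qed.

Lemma entryZ (R : pzRingType) m n c (A : 'M[R]_(m, n)) i j : (c *: A) i j = c * A i j.
Proof. by rewrite mxE. Qed.

Lemma outer_entry (R : comPzRingType) n (a b : 'cV[R]_n) i j :
  (a *m b^T) i j = a i 0 * b j 0.
Proof. by rewrite mxE big_ord1 mxE. Qed.

Section Psd.
Variables (R : realType) (n : nat).

Lemma psd0 : psd (0 : 'M[R]_n).
Proof. by move=> w; rewrite mulmx0 mul0mx mxE. Qed.

Lemma psdD (A B : 'M[R]_n) : psd A -> psd B -> psd (A + B).
Proof. by move=> pA pB w; rewrite mulmxDr mulmxDl mxE addr_ge0. Qed.

Lemma psdZ c (A : 'M[R]_n) : 0 <= c -> psd A -> psd (c *: A).
Proof. by move=> c0 pA w; rewrite -scalemxAr -scalemxAl mxE mulr_ge0. Qed.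

Lemma psd_sum (I : Type) (r : seq I) (F : I -> 'M[R]_n) :
  (forall i, psd (F i)) -> psd (\sum_(i <- r) F i).
Proof.
move=> pF; elim: r => [|i r ih]; first by rewrite big_nil; exact: psd0.
by rewrite big_cons; apply: psdD.
Qed.

End Psd.

Section RintegralSum.
Context d (T : measurableType d) (R : realType) (mu : {measure set T -> \bar R}).
Variable D : set T.
Hypothesis mD : measurable D.

Lemma integrable_eq (f g : T -> \bar R) : mu.-integrable D f ->
  (forall x, D x -> f x = g x) -> mu.-integrable D g.
Proof. by move=> i e; apply: (eq_integrable mD f) i => x /set_mem; exact: e. Qed.

Lemma integrable_sumR (I : Type) (s : seq I) (h : I -> T -> R) :
  (forall i, mu.-integrable D (EFin \o h i)) ->
  mu.-integrable D (EFin \o (fun x => \sum_(i <- s) h i x)).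
Proof.
move=> hi; apply: (integrable_eq (integrable_sum mD s (P:=xpredT) (fun j _ => hi j))).
by move=> x _ /=; rewrite -sumEFin.
Qed.

Lemma Rintegral_sum (I : Type) (s : seq I) (h : I -> T -> R) :
  (forall i, mu.-integrable D (EFin \o h i)) ->
  \int[mu]_(x in D) (\sum_(i <- s) h i x) = \sum_(i <- s) \int[mu]_(x in D) h i x.
Proof.
move=> hi; elim: s => [|i s ih].
  under eq_Rintegral do rewrite big_nil.
  by rewrite big_nil Rintegral_cst // mul0r.
under eq_Rintegral do rewrite big_cons.
by rewrite big_cons RintegralD // ?ih //; apply: integrable_sumR.
Qed.

End RintegralSum.

Section WeightedExpectation.
Context d (T : measurableType d) (R : realType) (mu : {measure set T -> \bar R}).
Variable D : set T.
Hypothesis mD : measurable D.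
Variable rho : T -> R.
Hypothesis rho_ge0 : forall x, D x -> 0 <= rho x.

Definition wexp (h : T -> R) := \int[mu]_(x in D) (h x * rho x).
Definition wint (h : T -> R) := mu.-integrable D (EFin \o (fun x => h x * rho x)).

Lemma eq_wint h1 h2 : (forall x, D x -> h1 x = h2 x) -> wint h1 -> wint h2.
Proof. by move=> e i; apply: (integrable_eq mD i) => x Dx /=; rewrite e. Qed.

Lemma eq_wexp h1 h2 : (forall x, D x -> h1 x = h2 x) -> wexp h1 = wexp h2.
Proof. by move=> e; apply: eq_Rintegral => x /set_mem Dx; rewrite e. Qed.

Lemma wintD h1 h2 : wint h1 -> wint h2 -> wint (fun x => h1 x + h2 x).
Proof.
by move=> i1 i2; apply: (integrable_eq mD (integrableD mD i1 i2)) => x _ /=; rewrite mulrDl.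
Qed.

Lemma wintZ c h : wint h -> wint (fun x => c * h x).
Proof.
by move=> i; apply: (integrable_eq mD (integrableZl mD c i)) => x _ /=; rewrite -EFinM mulrA.
Qed.

Lemma wintN h : wint h -> wint (fun x => - h x).
Proof. by move=> /(wintZ (-1)); apply: eq_wint => x _; rewrite mulN1r. Qed.

Lemma wintB h1 h2 : wint h1 -> wint h2 -> wint (fun x => h1 x - h2 x).
Proof. by move=> i1 i2; apply: wintD => //; apply: wintN. Qed.

Lemma wint_sum (I : Type) (s : seq I) (h : I -> T -> R) :
  (forall i, wint (h i)) -> wint (fun x => \sum_(i <- s) h i x).
Proof.
move=> hi; apply: (integrable_eq mD (integrable_sumR mD s hi)) => x _ /=.
by rewrite mulr_suml.
Qed.

Lemma wexpD h1 h2 : wint h1 -> wint h2 -> wexp (fun x => h1 x + h2 x) = wexp h1 + wexp h2.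
Proof.
by move=> i1 i2; rewrite /wexp -RintegralD //; apply: eq_Rintegral => x _; rewrite mulrDl.
Qed.

Lemma wexpZ c h : wint h -> wexp (fun x => c * h x) = c * wexp h.
Proof.
by move=> i; rewrite /wexp -RintegralZl //; apply: eq_Rintegral => x _; rewrite mulrA.
Qed.

Lemma wexpN h : wint h -> wexp (fun x => - h x) = - wexp h.
Proof.
by move=> i; rewrite -mulN1r -wexpZ //; apply: eq_wexp => x _; rewrite mulN1r.
Qed.

Lemma wexpB h1 h2 : wint h1 -> wint h2 -> wexp (fun x => h1 x - h2 x) = wexp h1 - wexp h2.
Proof. by move=> i1 i2; rewrite wexpD ?wexpN //; apply: wintN. Qed.

Lemma wexp_sum (I : Type) (s : seq I) (h : I -> T -> R) :
  (forall i, wint (h i)) -> wexp (fun x => \sum_(i <- s) h i x) = \sum_(i <- s) wexp (h i).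
Proof.
move=> hi; rewrite /wexp -Rintegral_sum //.
by apply: eq_Rintegral => x _; rewrite mulr_suml.
Qed.

Lemma wexp_sqr_ge0 h : 0 <= wexp (fun x => h x * h x).
Proof.
by apply: Rintegral_ge0 => x Dx; rewrite mulr_ge0 ?rho_ge0 // -expr2 sqr_ge0.
Qed.

(* |a b| <= a^2 + b^2 dominates the product. *)
Lemma wintM h1 h2 : measurable_fun D (fun x => h1 x * h2 x * rho x) ->
  wint (fun x => h1 x * h1 x) -> wint (fun x => h2 x * h2 x) ->
  wint (fun x => h1 x * h2 x).
Proof.
move=> m i1 i2; apply: (le_integrable mD _ _ (wintD i1 i2)); first exact/measurable_EFinP.
move=> x Dx /=; rewrite lee_fin !normrM (ger0_norm (rho_ge0 Dx)) ler_wpM2r ?rho_ge0 //.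
rewrite [X in _ <= X]ger0_norm; last by rewrite addr_ge0 // -expr2 sqr_ge0.
have : 0 <= (`|h1 x| - `|h2 x|) ^+ 2 by rewrite sqr_ge0.
rewrite sqrrB !real_normK ?num_real // !expr2 -mulr_natr.
have : 0 <= `|h1 x| * `|h2 x| by rewrite mulr_ge0.
lra.
Qed.

End WeightedExpectation.

Section CovarianceInequality.
Context d (T : measurableType d) (R : realType) (mu : {measure set T -> \bar R}).
Variable D : set T.
Hypothesis mD : measurable D.
Variable rho : T -> R.
Hypothesis rho_ge0 : forall x, D x -> 0 <= rho x.
Local Notation E := (wexp mu D rho).
Local Notation I := (wint mu D rho).

(* Expand E[(a - z^T v)^2] >= 0 at the optimal z = J^-1 q. *)
Lemma wexp_sqr_ge_quad L (a : T -> R) (v : T -> 'cV[R]_L) (J : 'M[R]_L) (q : 'cV[R]_L) :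
  I (fun x => a x * a x) ->
  (forall i, I (fun x => a x * v x i 0)) ->
  (forall i j, I (fun x => v x i 0 * v x j 0)) ->
  (forall i, E (fun x => a x * v x i 0) = q i 0) ->
  (forall i j, E (fun x => v x i 0 * v x j 0) = J i j) ->
  J \in unitmx ->
  (q^T *m invmx J *m q) 0 0 <= E (fun x => a x * a x).
Proof.
move=> Iaa Iav Ivv Eav Evv Ju.
pose z := invmx J *m q.
have Jz : J *m z = q by rewrite /z mulKVmx.
have ec x : (a x - \sum_i z i 0 * v x i 0) * (a x - \sum_i z i 0 * v x i 0)
    = a x * a x + \sum_i (-(2 * z i 0) * (a x * v x i 0))
      + \sum_i (z i 0 * \sum_j (z j 0 * (v x i 0 * v x j 0))).
  set s := \sum_i _.
  have -> : (a x - s) * (a x - s) = a x * a x - 2 * (a x * s) + s * s by ring.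
  congr (_ + _); first congr (_ + _).
    by rewrite /s mulr_sumr mulr_sumr -sumrN; apply: eq_bigr => i _; ring.
  rewrite /s mulr_suml; apply: eq_bigr => i _.
  by rewrite mulr_sumr mulr_sumr; apply: eq_bigr => j _; ring.
have Ivz i : I (fun x => \sum_j (z j 0 * (v x i 0 * v x j 0))).
  by apply: (wint_sum mD) => j; apply: (wintZ mD).
have Ezq i : E (fun x => \sum_j (z j 0 * (v x i 0 * v x j 0))) = q i 0.
  rewrite (wexp_sum mD); last by move=> j; apply: (wintZ mD).
  rewrite -Jz mxE; apply: eq_bigr => j _.
  by rewrite (wexpZ mD) // Evv mulrC.
have zq : \sum_i (z i 0 * q i 0) = (q^T *m invmx J *m q) 0 0.
  rewrite -[q^T *m _ *m q]mulmxA -/z mxE; apply: eq_bigr => i _.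
  by rewrite [q^T 0 i]mxE mulrC.
have := wexp_sqr_ge0 mu rho_ge0 (fun x => a x - \sum_i z i 0 * v x i 0).
rewrite (eq_wexp mu rho (fun x (_ : D x) => ec x)).
rewrite (wexpD mD) //; last first.
- by apply: (wint_sum mD) => i; apply: (wintZ mD).
- by apply: (wintD mD) => //; apply: (wint_sum mD) => i; apply: (wintZ mD).
rewrite (wexpD mD) //; last by apply: (wint_sum mD) => i; apply: (wintZ mD).
rewrite !(wexp_sum mD); first last.
- by move=> i; apply: (wintZ mD).
- by move=> i; apply: (wintZ mD).
under eq_bigr do rewrite (wexpZ mD) // Eav.
under [X in _ <= _ + _ + X]eq_bigr do rewrite (wexpZ mD) // Ezq.
have -> : \sum_i (-(2 * z i 0) * q i 0) = - (2 * \sum_i (z i 0 * q i 0)).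
  by rewrite mulr_sumr -sumrN; apply: eq_bigr => i _; ring.
rewrite zq; lra.
Qed.

Lemma psd_moment_schur M L (u : T -> 'cV[R]_M) (v : T -> 'cV[R]_L)
    (C : 'M[R]_M) (Q : 'M[R]_(M, L)) (J : 'M[R]_L) :
  (forall i j, I (fun x => u x i 0 * u x j 0)) ->
  (forall m l, I (fun x => u x m 0 * v x l 0)) ->
  (forall i j, I (fun x => v x i 0 * v x j 0)) ->
  (forall i j, E (fun x => u x i 0 * u x j 0) = C i j) ->
  (forall m l, E (fun x => u x m 0 * v x l 0) = Q m l) ->
  (forall i j, E (fun x => v x i 0 * v x j 0) = J i j) ->
  J \in unitmx ->
  psd (C - Q *m invmx J *m Q^T).
Proof.
move=> Iuu Iuv Ivv Euu Euv Evv Ju w.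
pose a x := \sum_m w m 0 * u x m 0.
have eaa x : a x * a x = \sum_i w i 0 * \sum_j (w j 0 * (u x j 0 * u x i 0)).
  rewrite /a mulr_suml; apply: eq_bigr => i _.
  by rewrite mulr_sumr mulr_sumr; apply: eq_bigr => j _; ring.
have eav l x : a x * v x l 0 = \sum_m w m 0 * (u x m 0 * v x l 0).
  by rewrite /a mulr_suml; apply: eq_bigr => m _; rewrite mulrA.
have Iaa : I (fun x => a x * a x).
  apply: (eq_wint mD (fun x (_ : D x) => esym (eaa x))).
  by apply: (wint_sum mD) => i; apply: (wintZ mD); apply: (wint_sum mD) => j; apply: (wintZ mD).
have Iav l : I (fun x => a x * v x l 0).
  apply: (eq_wint mD (fun x (_ : D x) => esym (eav l x))).
  by apply: (wint_sum mD) => m; apply: (wintZ mD).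
have Eav l : E (fun x => a x * v x l 0) = (Q^T *m w) l 0.
  rewrite (eq_wexp mu rho (fun x (_ : D x) => eav l x)).
  rewrite (wexp_sum mD); last by move=> m; apply: (wintZ mD).
  rewrite mxE; apply: eq_bigr => m _.
  by rewrite (wexpZ mD) // Euv mxE mulrC.
have Eaa : E (fun x => a x * a x) = (w^T *m C *m w) 0 0.
  rewrite (eq_wexp mu rho (fun x (_ : D x) => eaa x)).
  rewrite (wexp_sum mD); last first.
    by move=> i; apply: (wintZ mD); apply: (wint_sum mD) => j; apply: (wintZ mD).
  rewrite mxE; apply: eq_bigr => i _.
  rewrite (wexpZ mD); last by apply: (wint_sum mD) => j; apply: (wintZ mD).
  rewrite (wexp_sum mD); last by move=> j; apply: (wintZ mD).
  rewrite mxE mulr_suml mulr_sumr; apply: eq_bigr => j _.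
  by rewrite (wexpZ mD) // Euu mxE; ring.
have := wexp_sqr_ge_quad Iaa Iav Ivv Eav Evv Ju.
rewrite Eaa => Ele.
rewrite mulmxBr mulmxBl entryB subr_ge0; apply: le_trans Ele.
by rewrite trmx_mul trmxK !mulmxA.
Qed.

End CovarianceInequality.

Section DirectionalDerivative.
Context {R : realType} {V : normedModType R}.

Lemma derive_at_min (F : V -> R) (t v : V) :
  derivable F t v -> (forall s, F t <= F s) -> 'D_v F t = 0.
Proof.
move=> dF Fmin.
apply/eqP; rewrite eq_le; apply/andP; split.
  rewrite /derive (cvg_at_leftE (fun h : R => h^-1 *: ((F \o shift t) (h *: v) - F t))) //.
  apply: limr_le.
    rewrite -(cvg_at_leftE (fun h : R => h^-1 *: ((F \o shift t) (h *: v) - F t))) //.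
    apply: cvg_trans dF; apply: cvg_app.
    move=> A [e egt0 Ae]; exists e => // x xe xlt0; apply: Ae => //.
    exact/ltr0_neq0.
  near=> h; apply: mulr_le0_ge0; last by rewrite /= subr_ge0; exact: Fmin.
  by rewrite invr_le0; apply: ltW; near: h; exists 1 => /=.
rewrite /derive (cvg_at_rightE (fun h : R => h^-1 *: ((F \o shift t) (h *: v) - F t))) //.
apply: limr_ge.
  rewrite -(cvg_at_rightE (fun h : R => h^-1 *: ((F \o shift t) (h *: v) - F t))) //.
  apply: cvg_trans dF; apply: cvg_app.
  move=> A [e egt0 Ae]; exists e => // x xe xgt0; apply: Ae => //.
  exact/lt0r_neq0.
near=> h; apply: mulr_ge0; last by rewrite /= subr_ge0; exact: Fmin.
by rewrite invr_ge0; apply: ltW; near: h; exists 1 => /=.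
Unshelve. all: by end_near. Qed.

Lemma derive_affine_along (F : V -> R) (t v : V) (c : R) :
  (forall (h : R) s, F (h *: v + s) = h * c + F s) ->
  derivable F t v /\ 'D_v F t = c.
Proof.
move=> hF.
have q : (fun h : R => h^-1 *: ((F \o shift t) (h *: v) - F t)) @ 0^' --> c.
  apply/cvgrPdist_le => e e0; near=> h => /=.
  rewrite hF addrK /=.
  have hn : h != 0 by near: h; exact: nbhs_dnbhs_neq.
  rewrite [_ *: _](_ : _ = h^-1 * (h * c)) // mulrA mulVf // mul1r subrr normr0.
  exact: ltW.
split; first by apply/cvg_ex; exists c.
exact: cvg_lim.
Unshelve. all: by end_near. Qed.

Lemma measurable_fun_derive d (T : measurableType d) (D : set T) (F : T -> V -> R) (t v : V) :
  (forall s, measurable_fun D (fun x => F x s)) ->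
  (forall x, D x -> derivable (F x) t v) ->
  measurable_fun D (fun x => 'D_v (F x) t).
Proof.
move=> mF dF.
apply: (@measurable_fun_cvg _ _ _ D
  (fun n x => (harmonic n)^-1 * (F x (harmonic n *: v + t) - F x t))).
  by move=> n; apply: measurable_funM => //; apply: measurable_funB; exact: mF.
move=> x Dx.
have /cvg_ex[l hl] := dF x Dx.
have -> : 'D_v (F x) t = l by exact: cvg_lim.
move/cvgr_dnbhsP : hl => /(_ (@harmonic R)); apply.
split; last exact: cvg_harmonic.
by move=> n; rewrite gt_eqF // harmonic_gt0.
Qed.

End DirectionalDerivative.

Section SelectiveCRB.
Variables (R : realType) (d : measure_display) (T : measurableType d)
  (mu : {measure set T -> \bar R}) (M K : nat)
  (Lams : 'I_K -> {set 'I_M}) (Lam : {set 'I_M})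
  (f : 'cV[R]_#|Lam| -> T -> R) (sel : T -> 'I_K) (th : T -> 'cV[R]_M).
Local Notation L := #|Lam|.
Hypothesis pdf_meas : forall t, measurable_fun setT (f t).
Hypothesis pdf_ge0 : forall t x, 0 <= f t x.
Hypothesis pdf_int1 : forall t, (\int[mu]_x (f t x)%:E = 1)%E.
Hypothesis sel_meas : forall k, measurable (selset sel k).
Hypothesis th_meas : forall m, measurable_fun setT (fun x => th x m 0).
Hypothesis th_sq_int : forall t m,
  mu.-integrable setT (fun x => ((th x m 0) ^+ 2 * f t x)%:E).
Hypothesis th_coherent : forall x m, m \notin Lams (sel x) -> th x m 0 = 0.
Hypothesis prob_neq0 : forall k t, prob mu f sel k t != 0.
Hypothesis fcond_derivable : forall k t x l, selset sel k x ->
  derivable (fcond mu f sel k x) t (ebasis l).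
Hypothesis score_sq_int : forall k t i j, mu.-integrable (selset sel k)
  (fun x => (score mu f sel k x t i 0 * score mu f sel k x t j 0
             * fcond mu f sel k x t)%:E).
Hypothesis sFIM_unit : forall k t, sFIM mu f sel k t \in unitmx.
Hypothesis derive_under_integral : forall k (g : T -> R) l,
  measurable_fun setT g ->
  (forall s, mu.-integrable (selset sel k) (fun x => (g x * fcond mu f sel k x s)%:E)) ->
  (forall s, mu.-integrable (selset sel k)
               (fun x => (g x * 'D_(ebasis l) (fcond mu f sel k x) s)%:E)) ->
  forall t,
    derivable (fun s => \int[mu]_(x in selset sel k) (g x * fcond mu f sel k x s))
              t (ebasis l) /\
    'D_(ebasis l) (fun s => \int[mu]_(x in selset sel k) (g x * fcond mu f sel k x s)) t
      = \int[mu]_(x in selset sel k) (g x * 'D_(ebasis l) (fcond mu f sel k x) t).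
Hypothesis sbias_differentiable : forall k t, differentiable (sbias mu Lams f sel th k) t.

Local Notation A k := (selset sel k).
Local Notation p k s := (prob mu f sel k s).
Local Notation rho k s := (fun x => fcond mu f sel k x s).
Local Notation E k s := (wexp mu (A k) (rho k s)).
Local Notation I k s := (wint mu (A k) (rho k s)).
Local Notation v k s x := (score mu f sel k x s).
Local Notation Dfcond k l s x := ('D_(ebasis l) (fcond mu f sel k x) s).
Local Notation b k s := (sbias mu Lams f sel th k s).

Lemma prob_gt0 k s : 0 < p k s.
Proof. by rewrite lt_def prob_neq0 /=; apply: Rintegral_ge0 => x _. Qed.

Lemma pdf_integrable k s : mu.-integrable (A k) (EFin \o f s).
Proof.
apply: (integrableS measurableT (sel_meas k) (@subsetT _ _)).
apply/integrableP; split; first exact/measurable_EFinP.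
under eq_integral do rewrite /comp abse_EFin ger0_norm //.
by rewrite pdf_int1 ltry.
Qed.

Lemma fcond_ge0 k s x : 0 <= fcond mu f sel k x s.
Proof. by rewrite /fcond divr_ge0 // ltW // prob_gt0. Qed.

Lemma measurable_fcond k s : measurable_fun (A k) (rho k s).
Proof. by apply: measurable_funM => //; apply: measurable_funS (pdf_meas s). Qed.

Lemma wint1 k s : I k s (fun _ => 1).
Proof.
apply: (integrable_eq (sel_meas k) (integrableZl (sel_meas k) (p k s)^-1 (pdf_integrable k s))).
by move=> x _ /=; rewrite -EFinM /fcond mul1r mulrC.
Qed.

Lemma wexp1 k s : E k s (fun _ => 1) = 1.
Proof.
rewrite /wexp; under eq_Rintegral do rewrite mul1r /fcond.
rewrite RintegralZr //; last exact: pdf_integrable.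
by rewrite [X in X * _](_ : _ = p k s) // mulfV.
Qed.

Lemma wexp_cst k s c : E k s (fun _ => c) = c.
Proof.
rewrite (eq_wexp mu _ (h2 := fun _ => c * 1)); last by move=> x _; rewrite mulr1.
by rewrite (wexpZ (sel_meas k)) ?wexp1 ?mulr1 //; exact: wint1.
Qed.

(* Where the conditional density vanishes it attains its minimum, so its
   derivative vanishes too; this is why setting the score to 0 there is harmless. *)
Lemma derive_fcondE k l s x :
  A k x -> Dfcond k l s x = v k s x l 0 * fcond mu f sel k x s.
Proof.
move=> Ax; rewrite /score mxE.
have [fc0|/divfK //] := eqVneq (fcond mu f sel k x s) 0.
rewrite fc0 mulr0; apply: derive_at_min; first exact: fcond_derivable.
by move=> s'; rewrite fc0 fcond_ge0.
Qed.

Lemma measurable_derive_fcond k l s : measurable_fun (A k) (fun x => Dfcond k l s x).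
Proof.
apply: measurable_fun_derive => [s'|x Ax]; first exact: measurable_fcond.
exact: fcond_derivable.
Qed.

Definition L2 k s (h : T -> R) := measurable_fun (A k) h /\ I k s (fun x => h x * h x).

Lemma wintM_L2 k s h1 h2 : L2 k s h1 -> L2 k s h2 -> I k s (fun x => h1 x * h2 x).
Proof.
move=> [m1 i1] [m2 i2]; apply: (wintM (sel_meas k) (fun x _ => fcond_ge0 k s x)) => //.
by apply: measurable_funM; [exact: measurable_funM|exact: measurable_fcond].
Qed.

Lemma L2_cst k s c : L2 k s (fun _ => c).
Proof.
split => //; apply: (eq_wint (sel_meas k) (h1 := fun x => (c * c) * 1)).
  by move=> x _; rewrite mulr1.
exact: (wintZ (sel_meas k) _ (wint1 k s)).
Qed.

Lemma wint_L2 k s h : L2 k s h -> I k s h.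
Proof.
move=> Lh; apply: (eq_wint (sel_meas k) (h1 := fun x => h x * 1)).
  by move=> x _; rewrite mulr1.
by apply: wintM_L2 => //; exact: L2_cst.
Qed.

Lemma L2D k s h1 h2 : L2 k s h1 -> L2 k s h2 -> L2 k s (fun x => h1 x + h2 x).
Proof.
move=> L1 L2'; split; first by apply: measurable_funD; [case: L1|case: L2'].
apply: (eq_wint (sel_meas k)
  (h1 := fun x => h1 x * h1 x + 2 * (h1 x * h2 x) + h2 x * h2 x)).
  by move=> x _; ring.
apply: (wintD (sel_meas k)); first apply: (wintD (sel_meas k)).
- by case: L1.
- by apply: (wintZ (sel_meas k)); exact: wintM_L2.
- by case: L2'.
Qed.

Lemma L2Z k s c h : L2 k s h -> L2 k s (fun x => c * h x).
Proof.
move=> [m i]; split; first exact: measurable_funM.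
apply: (eq_wint (sel_meas k) (h1 := fun x => (c * c) * (h x * h x))).
  by move=> x _; ring.
exact: (wintZ (sel_meas k)).
Qed.

Lemma L2B k s h1 h2 : L2 k s h1 -> L2 k s h2 -> L2 k s (fun x => h1 x - h2 x).
Proof.
move=> L1 L2'; have := L2D L1 (L2Z (-1) L2').
by congr L2; apply/funext => x; rewrite mulN1r.
Qed.

Lemma L2_th k s m : L2 k s (fun x => th x m 0).
Proof.
split; first exact: measurable_funS (th_meas m).
apply: (integrable_eq (sel_meas k) (integrableZl (sel_meas k) (p k s)^-1
  (integrableS measurableT (sel_meas k) (@subsetT _ _) (th_sq_int s m)))) => x _ /=.
by rewrite -EFinM /fcond expr2; congr EFin; ring.
Qed.

Lemma wint_mul_score k s h l : L2 k s h -> I k s (fun x => h x * v k s x l 0).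
Proof.
move=> [mh ih]; apply: (wintM (sel_meas k) (fun x _ => fcond_ge0 k s x)) => //;
  last exact: score_sq_int.
apply: (eq_measurable_fun (fun x => h x * Dfcond k l s x)).
  by move=> x /set_mem Ax; rewrite derive_fcondE // mulrA.
by apply: measurable_funM => //; exact: measurable_derive_fcond.
Qed.

Lemma wint_score k s l : I k s (fun x => v k s x l 0).
Proof.
apply: (eq_wint (sel_meas k) (h1 := fun x => 1 * v k s x l 0)).
  by move=> x _; rewrite mul1r.
by apply: wint_mul_score; exact: L2_cst.
Qed.

Lemma integrable_mul_derive_fcond k s h l : L2 k s h ->
  mu.-integrable (A k) (fun x => (h x * Dfcond k l s x)%:E).
Proof.
move=> Lh; apply: (integrable_eq (sel_meas k) (wint_mul_score l Lh)) => x Ax /=.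
by rewrite derive_fcondE // mulrA.
Qed.

Lemma wexp_derive_under k h l : (forall s, L2 k s h) -> measurable_fun setT h ->
  forall s,
  derivable (fun s' => \int[mu]_(x in A k) (h x * fcond mu f sel k x s')) s (ebasis l) /\
  'D_(ebasis l) (fun s' => \int[mu]_(x in A k) (h x * fcond mu f sel k x s')) s
    = E k s (fun x => h x * v k s x l 0).
Proof.
move=> Lh mh s.
have [dh ->] := @derive_under_integral k h l mh (fun s' => wint_L2 (Lh s'))
  (fun s' => integrable_mul_derive_fcond l (Lh s')) s.
split => //; apply: eq_Rintegral => x /set_mem Ax.
by rewrite derive_fcondE // mulrA.
Qed.

Lemma wexp_score k s l : E k s (fun x => v k s x l 0) = 0.
Proof.
have [_ D1] := wexp_derive_under l (fun s' => L2_cst k s' 1) (measurable_cst (1 : R)) s.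
have E1 : (fun s' => \int[mu]_(x in A k) (1 * fcond mu f sel k x s')) = cst 1.
  by apply/funext => s'; exact: (wexp1 k s').
rewrite E1 derive_cst in D1; rewrite [RHS]D1.
by apply: eq_wexp => x _; rewrite mul1r.
Qed.

Lemma zpE (S : {set 'I_M}) (a : 'cV[R]_M) m : zp S a m 0 = (m \in S)%:R * a m 0.
Proof. by rewrite mxE; case: (m \in S); rewrite ?mul1r ?mul0r. Qed.

Definition est k m x := (m \in Lams k)%:R * th x m 0.
Definition par k m (s : 'cV[R]_L) := zp (Lams k) (theta_of s) m 0.
Definition err k (s : 'cV[R]_L) m x := est k m x - par k m s.

Lemma measurable_est k m : measurable_fun setT (est k m).
Proof. exact: measurable_funM. Qed.

Lemma L2_est k s m : L2 k s (est k m).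
Proof. exact: L2Z (L2_th k s m). Qed.

Lemma L2_err k s m : L2 k s (err k s m).
Proof. by apply: L2B; [exact: L2_est|exact: L2_cst]. Qed.

Lemma sbias_entry k s m : b k s m 0 = E k s (err k s m).
Proof.
rewrite /sbias /cexpmx mxE /cexp; apply: eq_Rintegral => x _.
by rewrite entryB /err /est /par !zpE.
Qed.

Lemma wexp_err k s m : E k s (err k s m) = E k s (est k m) - par k m s.
Proof.
rewrite (wexpB (sel_meas k)) ?wexp_cst //; first exact: wint_L2 (L2_est k s m).
exact: wint_L2 (L2_cst k s _).
Qed.

Lemma wexp_err_score k t m l :
  E k t (fun x => err k t m x * v k t x l 0) = E k t (fun x => est k m x * v k t x l 0).
Proof.
rewrite (eq_wexp mu _ (h2 := fun x => est k m x * v k t x l 0 - par k m t * v k t x l 0));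
  last by move=> x _; rewrite /err mulrBl.
rewrite (wexpB (sel_meas k)); first last.
- by apply: (wintZ (sel_meas k)); exact: wint_score.
- by apply: wint_mul_score; exact: L2_est.
by rewrite (wexpZ (sel_meas k)) ?wexp_score ?mulr0 ?subr0 //; exact: wint_score.
Qed.

Lemma wexp_centered_prod k t i j (a c : R) :
  E k t (fun x => (err k t i x - a) * (err k t j x - c)) =
  E k t (fun x => err k t i x * err k t j x) - c * E k t (err k t i)
    - a * E k t (err k t j) + a * c.
Proof.
have mA := sel_meas k.
have Iei := wint_L2 (L2_err k t i); have Iej := wint_L2 (L2_err k t j).
have Iee : I k t (fun x => err k t i x * err k t j x) by apply: wintM_L2; exact: L2_err.
have Ic := wintZ mA c Iei; have Ia := wintZ mA a Iej.
rewrite (eq_wexp mu _ (h2 := fun x => err k t i x * err k t j x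
      - c * err k t i x - a * err k t j x + (a * c) * 1)); last by move=> x _; ring.
rewrite (wexpD mA (wintB mA (wintB mA Iee Ic) Ia) (wintZ mA _ (wint1 k t))).
rewrite (wexpB mA (wintB mA Iee Ic) Ia) (wexpB mA Iee Ic).
by rewrite !(wexpZ mA) // ?wexp1 ?mulr1 //; exact: wint1.
Qed.

Lemma theta_of_shift (h : R) (l : 'I_L) (s : 'cV[R]_L) m :
  theta_of (h *: ebasis l + s) m 0 = h * (m == enum_val l)%:R + theta_of s m 0.
Proof.
rewrite /theta_of !mxE.
have -> : \sum_(l' < L) (if m == enum_val l' then (h *: ebasis l + s) l' 0 else 0)
   = h * \sum_(l' < L) (if m == enum_val l' then ((l' == l)%:R : R) else 0)
     + \sum_(l' < L) (if m == enum_val l' then s l' 0 else 0).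
  rewrite mulr_sumr -big_split /=; apply: eq_bigr => l' _.
  rewrite entryD entryZ /ebasis mxE andbT.
  by case: ifP => _; rewrite ?mulr0 ?addr0.
congr (h * _ + _).
rewrite (bigD1 l) //= eqxx big1 ?addr0; first by case: ifP.
by move=> l' nl; rewrite (negbTE nl); case: ifP.
Qed.

Lemma par_shift k m (l : 'I_L) (h : R) (s : 'cV[R]_L) :
  par k m (h *: ebasis l + s) = h * Dmat (Lams k) Lam m l + par k m s.
Proof.
rewrite /par !zpE theta_of_shift mulrDr; congr (_ + _); rewrite /Dmat mxE.
by case: (m \in Lams k); case: (m == enum_val l); rewrite /= ?mul1r ?mul0r ?mulr0 ?mulr1.
Qed.

(* b_k = E[est] - par and par is affine in theta_Lam with slope D_k. *)
Lemma Gmat_entry k t m l : Gmat mu Lams f sel th k t m l =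
  E k t (fun x => est k m x * v k t x l 0) - Dmat (Lams k) Lam m l.
Proof.
rewrite /Gmat mxE derive_mx; last exact: diff_derivable (sbias_differentiable k t).
rewrite mxE.
have -> : (fun s => b k s m 0) =
    (fun s => \int[mu]_(x in A k) (est k m x * fcond mu f sel k x s)) - (par k m).
  by apply/funext => s; rewrite sbias_entry wexp_err.
have [dest Dest] := wexp_derive_under l (fun s => L2_est k s m) (measurable_est k m) t.
have [dpar Dpar] := derive_affine_along t (fun h s => par_shift k m l h s).
by rewrite deriveB // Dest Dpar.
Qed.

Definition cmse k t := \matrix_(i, j) E k t (fun x => err k t i x * err k t j x).

Lemma psd_cmse_sub k t : psd (cmse k t - b k t *m (b k t)^T - Psi mu Lams f sel th k t).
Proof.
have mA := sel_meas k.
pose u x : 'cV[R]_M := \col_m (err k t m x - b k t m 0).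
have uE x i : u x i 0 = err k t i x - b k t i 0 by rewrite mxE.
have Lu i : L2 k t (fun x => err k t i x - b k t i 0).
  by apply: L2B; [exact: L2_err|exact: L2_cst].
rewrite /Psi.
apply: (psd_moment_schur mA (fun x _ => fcond_ge0 k t x) (u := u) (v := fun x => v k t x)).
- move=> i j; apply: (eq_wint mA (h1 := fun x =>
    (err k t i x - b k t i 0) * (err k t j x - b k t j 0))); last exact: wintM_L2.
  by move=> x _; rewrite !uE.
- move=> m l; apply: (eq_wint mA (h1 := fun x => (err k t m x - b k t m 0) * v k t x l 0)).
    by move=> x _; rewrite uE.
  exact: wint_mul_score.
- exact: score_sq_int.
- move=> i j; rewrite entryB outer_entry mxE.
  under eq_wexp do rewrite !uE.
  by rewrite wexp_centered_prod -!sbias_entry; ring.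
- move=> m l; rewrite entryD Gmat_entry addrC subrK -wexp_err_score.
  under eq_wexp do rewrite uE mulrBl.
  rewrite (wexpB mA); last by apply: (wintZ mA); exact: wint_score.
    by rewrite (wexpZ mA) ?wexp_score ?mulr0 ?subr0 //; exact: wint_score.
  by apply: wint_mul_score; exact: L2_err.
- move=> i j; rewrite /sFIM /cexpmx mxE /cexp /wexp; apply: eq_Rintegral => x _.
  by rewrite outer_entry.
- exact: sFIM_unit.
Qed.

Lemma Rintegral_sel_partition (F : T -> R) :
  (forall k, mu.-integrable (A k) (EFin \o F)) ->
  \int[mu]_x F x = \sum_k \int[mu]_(x in A k) F x.
Proof.
move=> iF; under eq_bigr do rewrite Rintegral_mkcond.
rewrite -Rintegral_sum //; last first.
  move=> k; apply: (integrable_eq measurableT ((integrable_mkcond _ (sel_meas k)).1 (iF k))).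
  by move=> x _ /=; rewrite /patch; case: ifP.
apply: eq_Rintegral => x _.
rewrite (bigD1 (sel x)) //= big1 ?addr0; first by rewrite /patch mem_set.
move=> k nk; rewrite /patch memNset //.
by rewrite /selset /= => e; move: nk; rewrite e eqxx.
Qed.

Lemma Rintegral_sel_wexp k t (F h : T -> R) : I k t h ->
  (forall x, A k x -> F x = h x * f t x) ->
  mu.-integrable (A k) (EFin \o F) /\ \int[mu]_(x in A k) F x = p k t * E k t h.
Proof.
move=> ih eF.
have e x : A k x -> F x = p k t * (h x * fcond mu f sel k x t).
  move=> Ax; rewrite eF // /fcond; have := prob_neq0 k t.
  by move: (p k t) => q q0; field.
split.
  apply: (integrable_eq (sel_meas k) (integrableZl (sel_meas k) (p k t) ih)) => x Ax /=.
  by rewrite -EFinM e.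
rewrite /wexp -RintegralZl //; apply: eq_Rintegral => x /set_mem Ax.
by rewrite e.
Qed.

Lemma MSSE_entry t i j : MSSE mu Lams f sel th t i j = \sum_k p k t * cmse k t i j.
Proof.
have eF k x : A k x -> SSE Lams sel th t x i j * f t x = (err k t i x * err k t j x) * f t x.
  by move=> Ax; rewrite /SSE outer_entry Ax !entryB /err /est /par !zpE.
have I2 k : I k t (fun x => err k t i x * err k t j x) by apply: wintM_L2; exact: L2_err.
rewrite /MSSE /expmx mxE Rintegral_sel_partition; last first.
  by move=> k; case: (Rintegral_sel_wexp (I2 k) (eF k)).
apply: eq_bigr => k _; rewrite mxE.
by case: (Rintegral_sel_wexp (I2 k) (eF k)).
Qed.

Definition par_out k i (t : 'cV[R]_L) := zp (~: Lams k) (theta_of t) i 0.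

Lemma MSE_entry t i j : MSE mu f th t i j = \sum_k p k t *
   (cmse k t i j - par_out k i t * b k t j 0 - b k t i 0 * par_out k j t
    + par_out k i t * par_out k j t).
Proof.
have eth k x i' : A k x -> (th x - theta_of t) i' 0 = err k t i' x - par_out k i' t.
  move=> Ax; rewrite entryB /err /est /par /par_out !zpE finset.in_setC.
  case Lki: (i' \in Lams k); rewrite /= ?mul1r ?mul0r ?subr0 ?sub0r //.
  by rewrite th_coherent ?sub0r // Ax Lki.
have eF k x : A k x -> ((th x - theta_of t) *m (th x - theta_of t)^T) i j * f t x
    = ((err k t i x - par_out k i t) * (err k t j x - par_out k j t)) * f t x.
  by move=> Ax; rewrite outer_entry !(eth k x).
have I2 k : I k t (fun x => (err k t i x - par_out k i t) * (err k t j x - par_out k j t)).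
  by apply: wintM_L2; apply: L2B; (exact: L2_err || exact: L2_cst).
rewrite /MSE /expmx mxE Rintegral_sel_partition; last first.
  by move=> k; case: (Rintegral_sel_wexp (I2 k) (eF k)).
apply: eq_bigr => k _.
case: (Rintegral_sel_wexp (I2 k) (eF k)) => _ ->; congr (_ * _).
by rewrite wexp_centered_prod !sbias_entry mxE; ring.
Qed.

Lemma MSSE_ge_BsCRB t : psd_ge (MSSE mu Lams f sel th t) (BsCRB mu Lams f sel th t).
Proof.
rewrite /psd_ge; have -> : MSSE mu Lams f sel th t - BsCRB mu Lams f sel th t =
    \sum_k p k t *: (cmse k t - b k t *m (b k t)^T - Psi mu Lams f sel th k t).
  rewrite /BsCRB (eq_bigl (fun _ => true)); last by move=> k /=; rewrite prob_neq0.
  apply/matrixP => i j; rewrite entryB MSSE_entry !summxE -sumrB.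
  by apply: eq_bigr => k _; rewrite !entryZ !entryB !entryD; ring.
apply: psd_sum => k; apply: psdZ; first exact: ltW (prob_gt0 k t).
exact: psd_cmse_sub.
Qed.

Lemma MSE_ge_bound t : psd_ge (MSE mu f th t)
  (BsCRB mu Lams f sel th t
   + \sum_(k < K) p k t *: (zp (~: Lams k) (theta_of t) *m (zp (~: Lams k) (theta_of t))^T)
   - \sum_(k < K) p k t *:
       (zp (~: Lams k) (theta_of t) *m (b k t)^T + b k t *m (zp (~: Lams k) (theta_of t))^T)).
Proof.
rewrite /psd_ge; set RHS := (X in psd (_ - X)).
suff -> : MSE mu f th t - RHS = MSSE mu Lams f sel th t - BsCRB mu Lams f sel th t.
  exact: MSSE_ge_BsCRB.
apply/matrixP => i j; rewrite /RHS !entryB !entryD MSE_entry MSSE_entry !summxE.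
have -> : \sum_k p k t * (cmse k t i j - par_out k i t * b k t j 0
    - b k t i 0 * par_out k j t + par_out k i t * par_out k j t)
  = \sum_k p k t * cmse k t i j
    + \sum_k (p k t *: (zp (~: Lams k) (theta_of t) *m (zp (~: Lams k) (theta_of t))^T)) i j
    - \sum_k (p k t *: (zp (~: Lams k) (theta_of t) *m (b k t)^T
        + b k t *m (zp (~: Lams k) (theta_of t))^T)) i j.
  rewrite -big_split -sumrB /=; apply: eq_bigr => k _.
  by rewrite !entryZ entryD !outer_entry /par_out; ring.
ring.
Qed.

Lemma BsCRB_unbiased t : (forall k s, b k s = 0) ->
  BsCRB mu Lams f sel th t = \sum_(k < K | p k t != 0)
    p k t *: (Dmat (Lams k) Lam *m invmx (sFIM mu f sel k t) *m (Dmat (Lams k) Lam)^T).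
Proof.
move=> b0; rewrite /BsCRB; apply: eq_bigr => k _; congr (_ *: _).
have G0 : Gmat mu Lams f sel th k t = 0.
  apply/matrixP => m l; rewrite /Gmat !mxE.
  have -> : sbias mu Lams f sel th k = cst 0 by apply/funext => s; exact: b0.
  by rewrite derive_cst mxE.
by rewrite b0 mul0mx addr0 /Psi G0 addr0.
Qed.

End SelectiveCRB.

Theorem theorem1
  (R : realType) (d : measure_display) (T : measurableType d)
  (mu : {measure set T -> \bar R})          (* reference measure "dx" on Omega_x *)
  (M K : nat)
  (Lams : 'I_K -> {set 'I_M})               (* candidate supports Lambda_1..Lambda_K *)
  (Lam : {set 'I_M})                        (* true support Lambda *)
  (f : 'cV[R]_#|Lam| -> T -> R)             (* f t x = f(x; theta_Lam = t) *)
  (sel : T -> 'I_K)                         (* selection rule: Lam-hat(x) = Lams (sel x) *)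
  (th : T -> 'cV[R]_M)                      (* estimator theta-hat *)
  (hLams : forall k, exists m, m \in Lams k)
  (hLam : exists k, Lams k = Lam)
  (hf_meas : forall t, measurable_fun setT (f t))
  (hf_ge0 : forall t x, 0 <= f t x)
  (hf_1 : forall t, (\int[mu]_x (f t x)%:E = 1)%E)
  (hsel : forall k, measurable (selset sel k))
  (hth_meas : forall m, measurable_fun setT (fun x => th x m 0))
  (hth_2 : forall t m, mu.-integrable setT (fun x => ((th x m 0) ^+ 2 * f t x)%:E))
  (hcoh : forall x m, m \notin Lams (sel x) -> th x m 0 = 0)
  (* (C1): conditional densities defined, scores exist, J_k well defined and nonsingular *)
  (hC1_pi : forall k t, prob mu f sel k t != 0)
  (hC1_score : forall k t x l, selset sel k x ->
      derivable (fcond mu f sel k x) t (ebasis l))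
  (hC1_J : forall k t i j, mu.-integrable (selset sel k)
      (fun x => (score mu f sel k x t i 0 * score mu f sel k x t j 0
                 * fcond mu f sel k x t)%:E))
  (hC1_inv : forall k t, sFIM mu f sel k t \in unitmx)
  (* (C2): differentiation under the integral sign *)
  (hC2 : forall k (g : T -> R) l,
      measurable_fun setT g ->
      (forall s, mu.-integrable (selset sel k)
                   (fun x => (g x * fcond mu f sel k x s)%:E)) ->
      (forall s, mu.-integrable (selset sel k)
                   (fun x => (g x * 'D_(ebasis l) (fcond mu f sel k x) s)%:E)) ->
      forall t,
        derivable (fun s => \int[mu]_(x in selset sel k) (g x * fcond mu f sel k x s))
                  t (ebasis l) /\
        'D_(ebasis l) (fun s => \int[mu]_(x in selset sel k) (g x * fcond mu f sel k x s)) t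
          = \int[mu]_(x in selset sel k) (g x * 'D_(ebasis l) (fcond mu f sel k x) t))
  (hb : forall k t, differentiable (sbias mu Lams f sel th k) t) :
  forall t : 'cV[R]_#|Lam|,
    psd_ge (MSSE mu Lams f sel th t) (BsCRB mu Lams f sel th t)
  /\
    psd_ge (MSE mu f th t)
      (BsCRB mu Lams f sel th t
       + \sum_(k < K) prob mu f sel k t *:
           (zp (~: Lams k) (theta_of t) *m (zp (~: Lams k) (theta_of t))^T)
       - \sum_(k < K) prob mu f sel k t *:
           (zp (~: Lams k) (theta_of t) *m (sbias mu Lams f sel th k t)^T
            + sbias mu Lams f sel th k t *m (zp (~: Lams k) (theta_of t))^T))
  /\
    ((forall k s, sbias mu Lams f sel th k s = 0) ->
     BsCRB mu Lams f sel th t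
       = \sum_(k < K | prob mu f sel k t != 0)
           prob mu f sel k t *:
             (Dmat (Lams k) Lam *m invmx (sFIM mu f sel k t) *m (Dmat (Lams k) Lam)^T)).
Proof.
move=> t; split; first by apply: MSSE_ge_BsCRB.
split; first by apply: MSE_ge_bound.
by apply: BsCRB_unbiased.
Qed.
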